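(* Not every (nondeterministic) abstract transducer can be transformed into an equivalent deterministic one: there exists an abstract transducer $T$ such that no deterministic abstract transducer $T_d$ (with the same abstract input and output domains) satisfies $T\equiv T_d$.
   Context: Abstract word domain over an alphabet $A$: a set $W$ of abstract words forming a complete lattice $(W,\sqsubseteq,\sqcap,\sqcup,\top,\bot)$, a denotation $[\![\cdot]\!]:W\to 2^{A^\infty}$ with $A^\infty=A^*\cup A^\omega$, and an abstraction $\alpha:2^{A^\infty}\to W$ with $[\![\alpha(S)]\!]=S$. It contains an abstract epsilon word $w_\epsilon$ with $[\![w_\epsilon]\!]=\{\epsilon\}$, and $[\![\bot]\!]=\emptyset$. Operations: concatenation $[\![u\cdot v]\!]=\{x\cdot y\mid x\in[\![u]\!],y\in[\![v]\!]\}$ (an infinite word $x$ concatenated with anything is $x$); left quotient $u^{v}=\alpha(\{s\mid p\cdot s\in[\![u]\!],\,p\in[\![v]\!]\})$; $\mathrm{head}(u)=\alpha(\{h\mid |h|=1,\ h\cdot x\in[\![u]\!]\})$; $\mathrm{tail}(u)=\alpha(\{x\mid h\cdot x\in[\![u]\!],\ |h|=1\})$. An abstract transducer is $T=(Q,D_I,D_O,\iota_0,F,\delta)$ where: $Q$ is a finite set of control states, implicitly containing a trap state $q_{trap}$ with transition $(q_{trap},\top,q_{trap},w_\epsilon)$ and a bottom state $q_\bot\notin F$ with no leaving transitions; $D_I$ is an abstract word domain (abstract words $W_I$) over a concrete input alphabet $\Sigma$ with denotations in $2^{\Sigma^*}$ and whose lattice is distributive and complemented; $D_O$ is an abstract word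 domain (abstract words $W_O$) over an output alphabet $\Theta$; $\iota_0$ is a non-empty finite partial map $Q\to W_O$ (the initial transducer state); $F\subseteq Q$ are accepting states; $\delta\subseteq Q\times W_I\times Q\times W_O$ is the transition relation, where no transition has input word $\bot$. A transducer state is a finite partial map $Q\to W_O$ (a set of pairs with distinct first components). For a set $M\subseteq Q\times W_O$ its image join is $\bigsqcup_\to M=\{(q,\bigsqcup\{\theta\mid(q,\theta)\in M\})\mid (q,\cdot)\in M\}$. An $\epsilon$-move is a transition whose input word $w$ has $[\![w]\!]=\{\epsilon\}$. The $\epsilon$-closure $E(q)$ is the set of states reachable from $q$ (including $q$) using only $\epsilon$-moves, plus $q_\bot$ if $E(q)$ contains an $\epsilon$-loop from which no state without leaving $\epsilon$-moves is reachable. Closure termination states: $CT(q)=\{q'\in E(q)\mid$ no $\epsilon$-move leaves $q'\}\cup(E(q)\cap F)$. Concrete language on termination $\Lambda(q,q_t)$: for $q_t\neq q_\bot$ the union, over all finite paths of $\epsilon$-moves from $q$ to $q_t$, of the concatenation of the denotations of the output words along the path ($\{\epsilon\}$ for the empty path); for $q_t=q_\bot$ the union over all infinite $\epsilon$-move paths from $q$ of the concatenations of their output denotations. Output closure: $\mathrm{Cl}(q,\theta_0)=\{(q_t,\alpha([\![\theta_0]\!]\cdot\Lambda(q,q_t)))\mid q_t\in CT(q)\}$. Run: $\mathrm{run}(q,\theta,w,w_\ell)=\{(q,\theta)\}$ if $w=w_\epsilon$, and otherwise $\bigsqcup_\to\bigcup\{\mathrm{run}(q'',\theta\cdot\theta'',\mathrm{tail}(w),w_\ell)\mid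 (q,w_\tau,q',\theta')\in\delta,\ (q'',\theta'')\in\mathrm{Cl}(q',\theta'),\ (w\cdot w_\ell)^{w_\tau}\neq\bot,\ \mathrm{head}(w)^{\mathrm{head}(w_\tau)}\neq\bot\}$. For a transducer state $\iota$, $\widehat{\mathrm{run}}(\iota,w,w_\ell)=\bigsqcup_\to\bigcup_{(q,\theta)\in\iota}\mathrm{run}(q,\theta,w,w_\ell)$, and for $\bar\sigma\in\Sigma^*$, $\hat\sigma\subseteq\Sigma^*$: $\widehat{\mathrm{run}}_T(\bar\sigma,\hat\sigma)=\widehat{\mathrm{run}}(\iota_0,\alpha_I(\{\bar\sigma\}),\alpha_I(\hat\sigma))$. $T$ is deterministic iff $|\iota_0|\le 1$ and every transducer state reached along any run has at most one element, i.e. $|\widehat{\mathrm{run}}_T(\bar\sigma,\hat\sigma)|\le 1$ for all $\bar\sigma\in\Sigma^*$, $\hat\sigma\subseteq\Sigma^*$. Intermediate input language $L_{in}(T)$: pairs $(\bar\sigma,\hat\sigma)$ such that $\widehat{\mathrm{run}}_T(\bar\sigma,\hat\sigma)$ contains a pair $(q,\theta)$ with $[\![\theta]\!]\neq\emptyset$. Transductions $\mathrm{Tr}(T)=\{(\bar\sigma,\hat\sigma,[\![\theta]\!])\mid(\bar\sigma,\hat\sigma)\in L_{in}(T),\ (q,\theta)\in\widehat{\mathrm{run}}_T(\bar\sigma,\hat\sigma)\}$; accepting transductions $\mathrm{Tr}_{acc}(T)$: same with additionally $q\in F$. Two transducers are equivalent ($T_1\equiv T_2$) iff $\mathrm{Tr}(T_1)=\mathrm{Tr}(T_2)$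 and $\mathrm{Tr}_{acc}(T_1)=\mathrm{Tr}_{acc}(T_2)$. *)

From Stdlib Require Import List Arith.
Import ListNotations.
Set Implicit Arguments.
Unset Strict Implicit.

Record wuniv := WUniv {
  U :> Type;
  ucat : U -> U -> U;
  ueps : U;
  ulen1 : U -> Prop
}.

Arguments ucat : clear implicits. Arguments ueps : clear implicits. Arguments ulen1 : clear implicits.

Definition finU (A : Type) : wuniv :=
  @WUniv (list A) (@app A) nil (fun x => length x = 1).

Inductive ainf (A : Type) : Type :=
| Fin : list A -> ainf A
| Inf : (nat -> A) -> ainf A.
Arguments Fin {A}. Arguments Inf {A}.

Definition acat (A : Type) (x y : ainf A) : ainf A :=
  match x, y with
  | Fin l, Fin m => Fin (l ++ m)
  | Fin l, Inf f => Inf (fun n => match nth_error l n with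
                                  | Some c => c
                                  | None => f (n - length l) end)
  | Inf f, _ => Inf f
  end.

Definition infU (A : Type) : wuniv :=
  @WUniv (ainf A) (@acat A) (Fin nil) (fun x => exists a : A, x = Fin [a]).

Definition aletter (A : Type) (x : ainf A) (k : nat) : option A :=
  match x with Fin l => nth_error l k | Inf f => Some (f k) end.

Fixpoint prefcat (A : Type) (a : nat -> ainf A) (n : nat) : ainf A :=
  match n with 0 => Fin nil | S m => acat (prefcat a m) (a m) end.

(* x is the (infinite) concatenation a_0 a_1 a_2 ... in A^infty *)
Definition infcat (A : Type) (a : nat -> ainf A) (x : ainf A) : Prop :=
  forall k c, aletter x k = Some c <-> exists n, aletter (prefcat a n) k = Some c.

Definition setcat (V : wuniv) (S T : V -> Prop) : V -> Prop :=
  fun x => exists a b, S a /\ T b /\ x = ucat V a b.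

Record wdomain (V : wuniv) := WDomain {
  W : Type;
  le : W -> W -> Prop;
  le_refl : forall x, le x x;
  le_trans : forall x y z, le x y -> le y z -> le x z;
  le_antisym : forall x y, le x y -> le y x -> x = y;
  sup : (W -> Prop) -> W;
  sup_ub : forall P x, P x -> le x (sup P);
  sup_least : forall P y, (forall x, P x -> le x y) -> le (sup P) y;
  inf : (W -> Prop) -> W;
  inf_lb : forall P x, P x -> le (inf P) x;
  inf_greatest : forall P y, (forall x, P x -> le y x) -> le y (inf P);
  den : W -> V -> Prop;
  alpha : (V -> Prop) -> W;
  alpha_den : forall S x, den (alpha S) x <-> S x;
  w_eps : W;
  den_eps : forall x, den w_eps x <-> x = ueps V;
  wcat : W -> W -> W;
  den_wcat : forall u v x, den (wcat u v) x <-> setcat (den u) (den v) x;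
  den_bot : forall x, ~ den (sup (fun _ => False)) x
}.

Arguments le {V} w _ _. Arguments sup {V} w _. Arguments inf {V} w _.
Arguments den {V} w _ _. Arguments alpha {V} w _. Arguments w_eps {V} w.
Arguments wcat {V} w _ _.

Section DomainOps.
Variable V : wuniv.
Variable D : wdomain V.

Definition wbot : W D := sup D (fun _ => False).
Definition wtop : W D := inf D (fun _ => False).
Definition wjoin (x y : W D) : W D := sup D (fun z => z = x \/ z = y).
Definition wmeet (x y : W D) : W D := inf D (fun z => z = x \/ z = y).

Definition lquot (u v : W D) : W D :=
  alpha D (fun s => exists p, den D v p /\ den D u (ucat V p s)).
Definition whead (u : W D) : W D :=
  alpha D (fun h => ulen1 V h /\ exists x, den D u (ucat V h x)).
Definition wtail (u : W D) : W D :=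
  alpha D (fun x => exists h, ulen1 V h /\ den D u (ucat V h x)).

Definition eps_word (w : W D) : Prop := forall x, den D w x <-> x = ueps V.

Definition distributive_complemented : Prop :=
  (forall x y z, wmeet x (wjoin y z) = wjoin (wmeet x y) (wmeet x z)) /\
  (forall x, exists y, wmeet x y = wbot /\ wjoin x y = wtop).
End DomainOps.

Section Transducers.
Variables (Sig Th : Type).
Variable DI : wdomain (finU Sig).
Variable DO : wdomain (infU Th).

Unset Implicit Arguments.
Record transducer := Transducer {
  Q : Type;
  Q_finite : exists l : list Q, forall q, In q l;
  qtrap : Q;
  qbot : Q;
  qtrap_qbot : qtrap <> qbot;
  iota0 : Q -> option (W DO);
  iota0_nonempty : exists q th, iota0 q = Some th;
  F : Q -> Prop;
  qbot_notF : ~ F qbot;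
  delta : Q -> W DI -> Q -> W DO -> Prop;
  trap_trans : delta qtrap (wtop DI) qtrap (w_eps DO);
  qbot_no_trans : forall w q th, ~ delta qbot w q th;
  delta_no_bot : forall q w q' th, delta q w q' th -> w <> wbot DI
}.
Set Implicit Arguments.

Variable T : transducer.

(* transducer states as (functional) relations Q -> W_O -> Prop *)
Definition tstate := Q T -> W DO -> Prop.

Definition image_join (M : tstate) : tstate :=
  fun q th => (exists th0, M q th0) /\ th = sup DO (M q).

Definition eps_step (q q' : Q T) : Prop :=
  exists w th, delta T q w q' th /\ eps_word w.

Inductive ereach : Q T -> Q T -> Prop :=
| ereach_refl q : ereach q q
| ereach_step q q1 q2 : eps_step q q1 -> ereach q1 q2 -> ereach q q2.

Definition inE (q q' : Q T) : Prop :=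
  ereach q q' \/
  (q' = qbot T /\
   exists q1 q2, ereach q q1 /\ eps_step q1 q2 /\ ereach q2 q1 /\
     forall q3, ereach q1 q3 -> exists q4, eps_step q3 q4).

Definition CT (q q' : Q T) : Prop :=
  inE q q' /\ ((~ exists q4, eps_step q' q4) \/ F T q').

Inductive epspath_out : Q T -> Q T -> ainf Th -> Prop :=
| epo_nil q : epspath_out q q (Fin nil)
| epo_cons q w q1 th a qt b :
    delta T q w q1 th -> eps_word w -> den DO th a ->
    epspath_out q1 qt b -> epspath_out q qt (acat a b).

Definition infpath_out (q : Q T) (x : ainf Th) : Prop :=
  exists (qs : nat -> Q T) (ws : nat -> W DI) (ths : nat -> W DO)
         (a : nat -> ainf Th),
    qs 0 = q /\
    (forall i, delta T (qs i) (ws i) (qs (S i)) (ths i) /\ eps_word (ws i)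
               /\ den DO (ths i) (a i)) /\
    infcat a x.

Definition Lam (q qt : Q T) : ainf Th -> Prop :=
  fun x => (qt <> qbot T /\ epspath_out q qt x) \/
           (qt = qbot T /\ infpath_out q x).

Definition Cl (q : Q T) (th0 : W DO) : tstate :=
  fun qt th => CT q qt /\ th = alpha DO (setcat (den DO th0) (Lam q qt)).

(* run, unfolded n times (n = number of input letters consumed) *)
Fixpoint runF (n : nat) (q : Q T) (th : W DO) (w wl : W DI) : tstate :=
  match n with
  | 0 => fun q0 th0 => q0 = q /\ th0 = th
  | S m => image_join (fun q0 th0 =>
      exists wt q' th' q'' th'',
        delta T q wt q' th' /\ Cl q' th' q'' th'' /\
        lquot (wcat DI w wl) wt <> wbot DI /\
        lquot (whead w) (whead wt) <> wbot DI /\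
        runF m q'' (wcat DO th th'') (wtail w) wl q0 th0)
  end.

(* the recursion of run terminates after exactly n steps on w *)
Definition run_length (w : W DI) (n : nat) : Prop :=
  Nat.iter n (@wtail _ DI) w = w_eps DI /\
  forall k, k < n -> Nat.iter k (@wtail _ DI) w <> w_eps DI.

Definition runT (sb : list Sig) (sh : list Sig -> Prop) : tstate :=
  fun q0 th0 => exists n,
    run_length (alpha DI (fun x => x = sb)) n /\
    image_join (fun q1 th1 => exists q th, iota0 T q = Some th /\
        runF n q th (alpha DI (fun x => x = sb)) (alpha DI sh) q1 th1) q0 th0.

Definition deterministic : Prop :=
  (forall q1 q2 th1 th2, iota0 T q1 = Some th1 -> iota0 T q2 = Some th2 -> q1 = q2) /\
  (forall sb sh q1 th1 q2 th2, runT sb sh q1 th1 -> runT sb sh q2 th2 ->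
     q1 = q2 /\ th1 = th2).

Definition Lin (sb : list Sig) (sh : list Sig -> Prop) : Prop :=
  exists q th, runT sb sh q th /\ exists x, den DO th x.

Definition Tr (sb : list Sig) (sh : list Sig -> Prop) (S : ainf Th -> Prop) : Prop :=
  Lin sb sh /\ exists q th, runT sb sh q th /\ S = den DO th.

Definition Tracc (sb : list Sig) (sh : list Sig -> Prop) (S : ainf Th -> Prop) : Prop :=
  Lin sb sh /\ exists q th, runT sb sh q th /\ F T q /\ S = den DO th.
End Transducers.

Definition tequiv (Sig Th : Type) (DI : wdomain (finU Sig)) (DO : wdomain (infU Th))
  (T1 T2 : transducer Sig Th DI DO) : Prop :=
  (forall sb sh S, Tr T1 sb sh S <-> Tr T2 sb sh S) /\
  (forall sb sh S, Tracc T1 sb sh S <-> Tracc T2 sb sh S).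

(** A deterministic transducer reaches at most one transducer state on every
    input, hence has at most one transduction per input.  A transducer with
    two initial states carrying different outputs already has two distinct
    transductions on the empty input, before reading anything, so it cannot be
    equivalent to a deterministic one.  As word domains we take the powerset
    lattices, whose abstraction and denotation are the identity. *)

From Stdlib Require Import List Classical FunctionalExtensionality PropExtensionality.
Import ListNotations.

Lemma sup_eq_singleton {V : wuniv} (D : wdomain V) (x : W D) :
  sup D (fun y => y = x) = x.
Proof.
  apply le_antisym.
  - apply sup_least. intros y ->. apply le_refl.
  - apply sup_ub. reflexivity.
Qed.

Section PowersetDomain.
Variable V : wuniv.

Lemma pred_ext {P P' : V -> Prop} : (forall x, P x <-> P' x) -> P = P'.
Proof.
  intro HP. apply functional_extensionality; intro x.
  apply propositional_extensionality, HP.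
Qed.

Definition pset : wdomain V := {|
  W := V -> Prop;
  le P P' := forall x, P x -> P' x;
  le_refl P x H := H;
  le_trans P P' P'' H H' x Hx := H' x (H x Hx);
  le_antisym P P' H H' := pred_ext (fun x => conj (H x) (H' x));
  sup F x := exists P, F P /\ P x;
  sup_ub F P HP x Hx := ex_intro _ P (conj HP Hx);
  sup_least F P' H x '(ex_intro _ P (conj HP Hx)) := H P HP x Hx;
  inf F x := forall P, F P -> P x;
  inf_lb F P HP x Hx := Hx P HP;
  inf_greatest F P' H x Hx P HP := H P HP x Hx;
  den P := P;
  alpha S := S;
  alpha_den S x := iff_refl (S x);
  w_eps x := x = ueps V;
  den_eps x := iff_refl _;
  wcat := @setcat V;
  den_wcat P P' x := iff_refl _;
  den_bot x '(ex_intro _ _ (conj H _)) := H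
|}.

Lemma pset_distributive_complemented : distributive_complemented pset.
Proof.
  split.
  - intros P P' P''. apply pred_ext; intro x; simpl. split.
    + intro H.
      assert (Hx : P x) by (apply H; auto).
      assert (Hyz : exists R, (R = P' \/ R = P'') /\ R x) by (apply H; auto).
      destruct Hyz as [R [[-> | ->] HR]].
      * exists (@wmeet _ pset P P'). split; [now left|].
        intros R' [-> | ->]; auto.
      * exists (@wmeet _ pset P P''). split; [now right|].
        intros R' [-> | ->]; auto.
    + intros [R [[-> | ->] HR]] R' [-> | ->]; simpl in HR.
      * now apply HR; left.
      * exists P'. split; [now left | now apply HR; right].
      * now apply HR; left.
      * exists P''. split; [now right | now apply HR; right].
  - intro P. exists (fun x => ~ P x). split; apply pred_ext; intro x; simpl.
    + split; [|intros [R [[] _]]].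
      intro H. exfalso. apply (H (fun x => ~ P x)); [now right|]. apply H. now left.
    + split; [intros _ R []|intros _].
      destruct (classic (P x)); [exists P | exists (fun x => ~ P x)]; auto.
Qed.

End PowersetDomain.

Arguments Q {Sig Th DI DO} t.
Arguments iota0 {Sig Th DI DO} t _.

Section Transductions.
Context {Sig Th : Type} {DI : wdomain (finU Sig)} {DO : wdomain (infU Th)}.

(* The first hypothesis says that [run] reads [sb] in zero steps. *)
Lemma runT_initial (T : transducer Sig Th DI DO) (sb : list Sig) (sh : list Sig -> Prop)
    (q : Q T) (th : W DO) :
  alpha DI (fun x => x = sb) = w_eps DI -> iota0 T q = Some th ->
  runT (T:=T) sb sh q th.
Proof.
  intros Heps Hq. exists 0. split.
  - split; [exact Heps | intros k Hk; inversion Hk].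
  - split.
    + exists th, q, th. simpl. auto.
    + rewrite <- (sup_eq_singleton DO th) at 1. f_equal.
      apply functional_extensionality; intro th'.
      apply propositional_extensionality. split.
      * intros ->. exists q, th. simpl. auto.
      * intros [q' [th'' [Hq' [-> ->]]]]. congruence.
Qed.

Lemma Tr_initial (T : transducer Sig Th DI DO) (sb : list Sig) (sh : list Sig -> Prop)
    (q : Q T) (th : W DO) :
  alpha DI (fun x => x = sb) = w_eps DI -> iota0 T q = Some th ->
  (exists x, den DO th x) -> Tr T sb sh (den DO th).
Proof.
  intros Heps Hq Hne. split.
  - exists q, th. split; [now apply runT_initial|exact Hne].
  - exists q, th. split; [now apply runT_initial|reflexivity].
Qed.

Lemma deterministic_Tr_unique (Td : transducer Sig Th DI DO) (sb : list Sig)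
    (sh : list Sig -> Prop) (S S' : ainf Th -> Prop) :
  deterministic Td -> Tr Td sb sh S -> Tr Td sb sh S' -> S = S'.
Proof.
  intros [_ Hdet] [_ [q [th [Hrun ->]]]] [_ [q' [th' [Hrun' ->]]]].
  now destruct (Hdet _ _ _ _ _ _ Hrun Hrun') as [_ ->].
Qed.

Lemma Tr_ambiguous_not_determinizable (T : transducer Sig Th DI DO) (sb : list Sig)
    (sh : list Sig -> Prop) (S S' : ainf Th -> Prop) :
  Tr T sb sh S -> Tr T sb sh S' -> S <> S' ->
  forall Td, deterministic Td -> ~ tequiv T Td.
Proof.
  intros HS HS' Hneq Td Hdet [Htr _].
  apply Hneq. eapply deterministic_Tr_unique; [exact Hdet | apply Htr, HS | apply Htr, HS'].
Qed.

End Transductions.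

Definition initial_output (b : bool) : W (pset (infU unit)) :=
  if b then (fun x => x = Fin []) else (fun x => x = Fin [tt]).

Definition two_initial_states : transducer unit unit (pset _) (pset _).
Proof.
  refine {|
    Q := bool; qtrap := true; qbot := false;
    iota0 b := Some (initial_output b);
    F _ := False;
    delta q w q' th := q = true /\ w = wtop _ /\ q' = true /\ th = w_eps _
  |}.
  - exists [true; false]. intros [|]; simpl; auto.
  - discriminate.
  - now exists true, (initial_output true).
  - auto.
  - repeat split.
  - intros w q th [H _]. discriminate.
  - intros q w q' th [_ [-> _]] Hbot.
    assert (Htop : wtop (pset (finU unit)) []) by (intros P []).
    rewrite Hbot in Htop. now destruct Htop as [P [[] _]].
Defined.

Theorem mainTheorem2 :
  exists (Sig Th : Type) (DI : wdomain (finU Sig)) (DO : wdomain (infU Th)),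
    distributive_complemented DI /\
    exists T : transducer Sig Th DI DO,
      forall Td : transducer Sig Th DI DO, deterministic Td -> ~ tequiv T Td.
Proof.
  exists unit, unit, (pset _), (pset _).
  split; [apply pset_distributive_complemented|].
  exists two_initial_states.
  apply (Tr_ambiguous_not_determinizable two_initial_states [] (fun _ => False)
           (initial_output true) (initial_output false)).
  - apply (Tr_initial two_initial_states _ _ true (initial_output true)); [reflexivity..|].
    now exists (Fin []).
  - apply (Tr_initial two_initial_states _ _ false (initial_output false)); [reflexivity..|].
    now exists (Fin [tt]).
  - intro Heq. assert (H : initial_output false (Fin [])) by (rewrite <- Heq; reflexivity).
    discriminate H.
Qed.
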